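(* Let $\mathfrak g$ be a finite-dimensional Lie algebra over a field $\mathbb K$ of characteristic zero and $\mathfrak h\subset\mathfrak g$ a nonzero commutative ideal. Then $$\dim_{\mathbb K(\mathfrak h^* )}L_{\mathfrak h}=\dim_{\mathbb K}\mathrm{St}(h)-\dim_{\mathbb K}\mathfrak h+1,$$ where $\mathrm{St}(h)$ is the stationary subalgebra of a generic $h\in\mathfrak h^*$.
   Context: $\pi:\mathfrak g^*\to\mathfrak h^*$ is restriction. For $h\in\mathfrak h^*$, $\mathrm{St}(h)=\{\xi\in\mathfrak g\mid\langle h,[\xi,\eta]\rangle=0\ \forall\eta\in\mathfrak h\}$ (stationary subalgebra for the representation of $\mathfrak g$ on $\mathfrak h^*$ dual to $\operatorname{ad}|_{\mathfrak h}$). $\mathbb K(\mathfrak h^* )=\operatorname{Frac}S(\mathfrak h)$ is the field of rational functions on $\mathfrak h^*$. A rational section is a rational map $\Psi:\mathfrak h^*\to\mathfrak g$ with $\Psi(h)\in\mathrm{St}(h)$ for generic $h$; these form a $\mathbb K(\mathfrak h^* )$-vector space (and Lie algebra with $[\Psi_1,\Psi_2](h)=[\Psi_1(h),\Psi_2(h)]$). $L_{\mathfrak h}$ is the set of rational functions $f_\Psi(x)=\langle x,\Psi(\pi(x))\rangle$ on $\mathfrak g^*$, $\Psi$ a rational section; it is a vector space (indeed a Lie algebra under the Lie–Poisson bracket) over $\mathbb K(\mathfrak h^* )$. *)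

From HB Require Import structures.
From mathcomp Require Import all_boot all_order all_algebra.
From mathcomp Require Import mpoly.

Set Implicit Arguments.
Unset Strict Implicit.
Unset Printing Implicit Defensive.

Import GRing.Theory.
Local Open Scope ring_scope.
Local Notation "x %:F" := (@FracField.tofrac _ x).

(* Conventions.
   * g = K^n, elements are row vectors 'rV[K]_n; g^* = K^n with the pairing
     <x, xi> = \sum_i x_i xi_i; the coordinate functions on g^* are 'X_i.
   * h is the row space of a row-free matrix B : 'M_(m,n); its rows b_j form a
     basis of h, so dim h = m.  h^* = K^m via the dual basis: c : 'rV_m is the
     functional lambda_c with lambda_c(b_j) = c_j.  Coordinate functions on h^*
     are 'X_j, j < m, so S(h) = {mpoly K[m]} and K(h^* ) = {fraction {mpoly K[m]}}.
   * pi : g^* -> h^* is restriction: (pi x)_j = x(b_j) = \sum_i B j i * x_i.  *)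

Section LieDefs.
Variable K : fieldType.
Variables n m : nat.

Definition is_lie_bracket (br : 'rV[K]_n -> 'rV[K]_n -> 'rV[K]_n) : Prop :=
  [/\ (forall (a : K) x y z, br (a *: x + y) z = a *: br x z + br y z),
      (forall (a : K) x y z, br z (a *: x + y) = a *: br z x + br z y),
      (forall x, br x x = 0) &
      (forall x y z, br x (br y z) + br y (br z x) + br z (br x y) = 0)].

Definition is_comm_ideal (br : 'rV[K]_n -> 'rV[K]_n -> 'rV[K]_n)
  (B : 'M[K]_(m, n)) : Prop :=
  (forall xi eta, (eta <= B)%MS -> (br xi eta <= B)%MS) /\
  (forall eta1 eta2, (eta1 <= B)%MS -> (eta2 <= B)%MS -> br eta1 eta2 = 0).

(* value of the functional c in h^* on an element v of h *)
Definition hpair (B : 'M[K]_(m, n)) (c : 'rV[K]_m) (v : 'rV[K]_n) : K :=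
  \sum_(j < m) (v *m pinvmx B) 0 j * c 0 j.

Definition St (br : 'rV[K]_n -> 'rV[K]_n -> 'rV[K]_n) (B : 'M[K]_(m, n))
  (c : 'rV[K]_m) (xi : 'rV[K]_n) : Prop :=
  forall eta, (eta <= B)%MS -> hpair B c (br xi eta) = 0.

Definition has_dim (P : 'rV[K]_n -> Prop) (s : nat) : Prop :=
  exists S : 'M[K]_(s, n), row_free S /\ forall v, P v <-> (v <= S)%MS.

Definition evh (p : {mpoly K[m]}) (c : 'rV[K]_m) : K := p.@[fun j => c 0 j].

(* s is the dimension of St(h) for generic h in h^*: it holds on the nonempty
   Zariski open set {p <> 0}, for some nonzero polynomial p *)
Definition generic_St_dim br B (s : nat) : Prop :=
  exists p : {mpoly K[m]}, p != 0 /\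
    forall c : 'rV[K]_m, evh p c != 0 -> has_dim (St br B c) s.

(* A rational map Psi : h^* -> g is given by polynomial numerators P_i and a
   nonzero common denominator q:  Psi(c) = (P_i(c) / q(c))_i. *)
Definition ratmap_eval (P : 'I_n -> {mpoly K[m]}) (q : {mpoly K[m]})
  (c : 'rV[K]_m) : 'rV[K]_n := \row_i (evh (P i) c / evh q c).

Definition rational_section br B (P : 'I_n -> {mpoly K[m]}) (q : {mpoly K[m]})
  : Prop :=
  q != 0 /\ exists p : {mpoly K[m]}, p != 0 /\
    forall c : 'rV[K]_m, evh p c != 0 ->
      evh q c != 0 /\ St br B c (ratmap_eval P q c).

Definition pullpoly (B : 'M[K]_(m, n)) (p : {mpoly K[m]}) : {mpoly K[n]} :=
  comp_mpoly [tuple \sum_(i < n) B j i *: 'X_i | j < m] p.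

Definition KH := {fraction {mpoly K[m]}}.
Definition KG := {fraction {mpoly K[n]}}.

Definition pullfrac (B : 'M[K]_(m, n)) (f : KH) : KG :=
  (pullpoly B (\n_(repr f)))%:F / (pullpoly B (\d_(repr f)))%:F.

(* f_Psi(x) = <x, Psi(pi x)> as an element of K(g^* ) *)
Definition fPsi B (P : 'I_n -> {mpoly K[m]}) (q : {mpoly K[m]}) : KG :=
  (\sum_(i < n) 'X_i * pullpoly B (P i))%:F / (pullpoly B q)%:F.

Definition Lh br B (f : KG) : Prop :=
  exists P q, rational_section br B P q /\ f = fPsi B P q.

(* L_h has dimension d over K(h^* ), which acts on K(g^* ) through pi:
   it has a K(h^* )-basis of d elements. *)
Definition Lh_has_dim br B (d : nat) : Prop :=
  exists fs : 'I_d -> KG,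
    (forall k, Lh br B (fs k)) /\
    (forall a : 'I_d -> KH,
        \sum_(k < d) pullfrac B (a k) * fs k = 0 -> forall k, a k = 0) /\
    (forall f, Lh br B f ->
        exists a : 'I_d -> KH, f = \sum_(k < d) pullfrac B (a k) * fs k).

End LieDefs.

From HB Require Import structures.
From mathcomp Require Import all_boot all_order all_algebra.
From mathcomp Require Import mpoly.

(* For c in h^*, St(c) is the row kernel of the n x m matrix with entries
   <c, [e_i, b_j]>.  These entries are linear forms in c, so this matrix is the
   specialisation at c of a matrix M over S(h).  Off the zero set of a maximal
   nonvanishing minor of M, the rank of M(c) equals the rank of M over K(h^* ),
   hence the generic dimension of St is s = n - rank M (characteristic zero is
   only used to make K infinite).
   Clearing denominators identifies rational sections with ker M over K(h^* ),
   and Psi |-> f_Psi is K(h^* )-semilinear.  As h is a commutative ideal,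
   h (x) K(h^* ) lies in ker M.  The map Psi |-> f_Psi has its kernel inside
   h (x) K(h^* ), since a polynomial identity in x in g^* that only depends on
   pi x survives translation by ker pi; and it sends h (x) K(h^* ) onto the
   single line spanned by x |-> x(b_0), because f_b is the pull-back of b
   itself.  Hence dim L_h = (s - m) + 1. *)

Set Implicit Arguments.
Unset Strict Implicit.
Unset Printing Implicit Defensive.

Import GRing.Theory.
Local Open Scope ring_scope.
Local Notation "x %:F" := (@FracField.tofrac _ x).

Section FractionRepr.
Variable R : idomainType.

Lemma pi_mul_den (x : {ratio R}) :
  (\pi_{fraction R})%qT x * (\d_x)%:F = (\n_x)%:F.
Proof.
unlock FracField.tofrac.
have -> : (\pi_{fraction R})%qT x * (\pi_{fraction R})%qT (Ratio \d_x 1)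
    = (\pi_{fraction R})%qT (FracField.mulf x (Ratio \d_x 1)).
  by rewrite FracField.pi_mul.
apply/eqmodP => /=; rewrite FracField.equivfE /FracField.mulf.
by rewrite !numden_Ratio ?mulr1 ?oner_neq0 ?denom_ratioP // mulrC.
Qed.

Lemma frac_numden (f : {fraction R}) :
  f = (\n_(repr f))%:F / (\d_(repr f))%:F.
Proof.
have d_neq0 : (\d_(repr f))%:F != 0 by rewrite tofrac_eq0 denom_ratioP.
by apply: (canRL (mulfK d_neq0)); rewrite -pi_mul_den reprK.
Qed.

Lemma frac_ratio (f : {fraction R}) :
  exists a, exists2 d, d != 0 & f = a%:F / d%:F.
Proof. by exists \n_(repr f), \d_(repr f); [apply: denom_ratioP | apply: frac_numden]. Qed.

End FractionRepr.

Lemma mpolyXU_neq0 (R : nzRingType) n (i : 'I_n) : 'X_i != 0 :> {mpoly R[n]}.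
Proof.
apply/eqP => /(congr1 (mcoeff U_(i))).
by rewrite mcoeffXU eqxx mcoeff0 => /eqP; rewrite oner_eq0.
Qed.

Section MultiToUni.
Variable R : comRingType.

Definition mnm_init n (mu : 'X_{1..n.+1}) : 'X_{1..n} :=
  [multinom mu (widen_ord (leqnSn n) i) | i < n].

Lemma mnm_init_inj n (mu1 mu2 : 'X_{1..n.+1}) :
  mu1 ord_max = mu2 ord_max -> mnm_init mu1 = mnm_init mu2 -> mu1 = mu2.
Proof.
move=> eq_max /mnmP eq_init; apply/mnmP => i.
have [lt_in | ge_in] := ltnP i n.
  have := eq_init (Ordinal lt_in); rewrite !mnmE.
  by have -> : widen_ord (leqnSn n) (Ordinal lt_in) = i by apply: val_inj.
suff -> : i = ord_max by [].
by apply: val_inj => /=; apply/eqP; rewrite eqn_leq ge_in -ltnS ltn_ord.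
Qed.

Lemma mcoeff_muni n (p : {mpoly R[n.+1]}) k nu :
  ((muni p)`_k)@_nu =
    \sum_(mu <- msupp p | mu ord_max == k) p@_mu * (mnm_init mu == nu)%:R.
Proof.
rewrite muniE coef_sumMXn raddf_sum /=.
by apply: eq_bigr => mu _; rewrite mcoeffZ mcoeffX.
Qed.

Lemma muni_eq0 n (p : {mpoly R[n.+1]}) : muni p = 0 -> p = 0.
Proof.
move=> p0; apply/eqP; rewrite -msupp_eq0; case E: (msupp p) => [//|mu s].
have mu_supp : mu \in msupp p by rewrite E inE eqxx.
have := mcoeff_muni p (mu ord_max) (mnm_init mu).
rewrite p0 coef0 mcoeff0 big_mkcond (bigD1_seq mu) ?msupp_uniq //= !eqxx mulr1.
rewrite big1 ?addr0 => [/esym/eqP|nu nu_neq]; first by rewrite mcoeff_eq0 mu_supp.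
case: eqP => [eq_max|//]; case: eqP => [eq_init|]; last by rewrite mulr0.
by case/eqP: nu_neq; apply: mnm_init_inj.
Qed.

Lemma meval_muni n (p : {mpoly R[n.+1]}) (v : 'I_n.+1 -> R) :
  p.@[v] = (map_poly (meval (v \o widen_ord (leqnSn n))) (muni p)).[v ord_max].
Proof.
rewrite muniE rmorph_sum horner_sum mevalE; apply: eq_bigr => mu _.
rewrite -mul_polyC rmorphM /= map_polyC map_polyXn hornerCM hornerXn.
rewrite /= mevalZ mevalX big_ord_recr /= mulrA; congr (_ * _ * _).
by apply: eq_bigr => i _; rewrite mnmE.
Qed.

End MultiToUni.

Section NonvanishingPolynomial.
Variables (R : idomainType) (f : nat -> R).
Hypothesis f_inj : injective f.

Lemma poly_nonroot (u : {poly R}) : u != 0 -> exists t, ~~ root u t.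
Proof.
move=> u_neq0; set ts := map f (iota 0 (size u)).
have : ~~ all (root u) ts.
  apply/negP => /(max_poly_roots u_neq0).
  by rewrite map_inj_uniq // iota_uniq size_map size_iota ltnn => /(_ isT).
by case/allPn => t _; exists t.
Qed.

Lemma mpoly_nonvanishing n (p : {mpoly R[n]}) : p != 0 -> exists v, p.@[v] != 0.
Proof.
elim: n p => [|n IHn] p p_neq0.
  have p_const : p = (p@_0%MM)%:MP.
    apply/mpolyP => mu; rewrite mcoeffC.
    suff -> : mu = 0%MM by rewrite eqxx mulr1.
    by apply/mnmP => -[].
  by exists (fun=> 0); rewrite p_const mevalC -(mpolyC_eq0 0) -p_const.
have lc_neq0 : lead_coef (muni p) != 0.
  by rewrite lead_coef_eq0; apply: contra_neq p_neq0; apply: muni_eq0.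
have [v' v'_nz] := IHn _ lc_neq0.
set u := map_poly (meval v') (muni p).
have u_neq0 : u != 0 by rewrite -lead_coef_eq0 /u lead_coef_map_eq.
have [t t_nonroot] := poly_nonroot u_neq0.
exists (fun i => if unlift ord_max i is Some j then v' j else t).
rewrite meval_muni unlift_none (@eq_map_poly _ _ _ (meval v')) // => q.
apply: meval_eq => j /=.
have -> : widen_ord (leqnSn n) j = lift ord_max j.
  by apply: val_inj; rewrite /= /bump leqNgt ltn_ord.
by rewrite liftK.
Qed.

End NonvanishingPolynomial.

Section GenericPoints.
Variables (K : fieldType) (m : nat).
Hypothesis K_char0 : [pchar K] =i pred0.

Lemma natf_inj : injective (fun k : nat => k%:R : K).
Proof.
move=> k1 k2 /= eq_k; wlog le_k : k1 k2 eq_k / (k1 <= k2)%N.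
  by move=> W; have [le|/ltnW le] := leqP k1 k2; [apply: W | apply/esym/W].
have : (k2 - k1)%:R == 0 :> K by rewrite natrB // eq_k subrr.
rewrite ((pcharf0P K).1 K_char0) subn_eq0 => le_k'.
by apply/eqP; rewrite eqn_leq le_k le_k'.
Qed.

Lemma evhM (p q : {mpoly K[m]}) c : evh (p * q) c = evh p c * evh q c.
Proof. exact: mevalM. Qed.

Lemma evh_nonvanishing (p : {mpoly K[m]}) : p != 0 -> exists c, evh p c != 0.
Proof.
case/(mpoly_nonvanishing natf_inj) => v v_nz.
by exists (\row_j v j); rewrite /evh (@meval_eq _ _ _ v) // => j; rewrite mxE.
Qed.

Lemma evh_nonvanishing2 (p q : {mpoly K[m]}) : p != 0 -> q != 0 ->
  exists c, evh p c != 0 /\ evh q c != 0.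
Proof.
move=> p_neq0 q_neq0; have [c] := evh_nonvanishing (mulf_neq0 p_neq0 q_neq0).
by rewrite evhM mulf_eq0 negb_or => /andP; exists c.
Qed.

Lemma mpoly_generic_eq0 (p q : {mpoly K[m]}) :
  p != 0 -> (forall c, evh p c != 0 -> evh q c = 0) -> q = 0.
Proof.
move=> p_neq0 q_gen0; apply/eqP/negPn/negP => q_neq0.
have [c [q_c p_c]] := evh_nonvanishing2 q_neq0 p_neq0.
by move: q_c; rewrite q_gen0 ?eqxx.
Qed.

End GenericPoints.

Section MatrixRank.
Variable F : fieldType.

Lemma mxrank_mxsub p q k l (f : 'I_k -> 'I_p) (g : 'I_l -> 'I_q) (A : 'M[F]_(p, q)) :
  (\rank (mxsub f g A) <= \rank A)%N.
Proof.
rewrite -[A in mxsub _ _ A]mulmx1 mxsub_mul (leq_trans (mxrankM_maxl _ _)) //.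
by rewrite rowsubE mxrankM_maxr.
Qed.

Lemma minor_neq0_mxrank p q k (f : 'I_k -> 'I_p) (g : 'I_k -> 'I_q)
    (A : 'M[F]_(p, q)) :
  \det (mxsub f g A) != 0 -> (k <= \rank A)%N.
Proof.
move=> det_neq0; rewrite -[k](@mxrank_unit _ _ (mxsub f g A)) ?mxrank_mxsub //.
by rewrite unitmxE unitfE.
Qed.

Lemma mxrank_minor p q (A : 'M[F]_(p, q)) :
  exists f : 'I_(\rank A) -> 'I_p, exists g : 'I_(\rank A) -> 'I_q,
    \det (mxsub f g A) != 0.
Proof.
set f := maxrankfun A.
have full_rowsubT : row_full (rowsub f A)^T.
  by rewrite /row_full mxrank_tr; apply: maxrowsub_free.
set g := fullrankfun full_rowsubT; exists f, g.
have := fullrowsub_unit full_rowsubT; rewrite unitmxE unitfE -/g.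
suff -> : rowsub g (rowsub f A)^T = (mxsub f g A)^T by rewrite det_tr.
by apply/matrixP => i j; rewrite !mxE.
Qed.

Lemma complement_basis p q r k (W : 'M[F]_(p, k)) (U : 'M[F]_(q, k)) :
  (U <= W)%MS -> \rank U = q -> \rank W = r ->
  exists C : 'M[F]_(r - q, k),
    [/\ row_free C, (C <= W)%MS, (C :&: U)%MS = 0 & (W <= C + U)%MS].
Proof.
move=> UW rkU rkW; set D := (W :\: U)%MS.
have DU0 : (D :&: U)%MS = 0 := capmx_diff W U.
have DW : (D <= W)%MS := diffmxSl W U.
have DU_W : (D + U :=: W)%MS.
  apply/eqmxP; rewrite addsmx_sub DW UW /=.
  by rewrite -{1}(addsmx_diff_cap_eq W U) addsmxS ?capmxSr.
have rkD : \rank D = (r - q)%N.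
  have := mxrank_sum_cap D U.
  by rewrite DU0 mxrank0 addn0 rkU DU_W rkW => ->; rewrite addnK.
have [C C_free eqCD] : exists2 C : 'M_(r - q, k), row_free C & (C :=: D)%MS.
  exists (castmx (rkD, erefl k) (row_base D)).
    by rewrite row_free_castmx row_base_free.
  exact: eqmx_trans (eqmx_cast _ _) (eq_row_base _).
exists C; split=> //.
- by rewrite eqCD.
- by apply/eqP; rewrite -submx0 -DU0 capmxS // eqCD.
by rewrite -DU_W addsmxS // eqCD.
Qed.

End MatrixRank.

Lemma lin_sumZ (R : pzRingType) (U V : lmodType R) (f : U -> V) :
  (forall a x y, f (a *: x + y) = a *: f x + f y) ->
  forall (I : Type) (r : seq I) (a : I -> R) (x : I -> U),
  f (\sum_(i <- r) a i *: x i) = \sum_(i <- r) a i *: f (x i).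
Proof.
move=> f_lin I r a x; have f0 : f 0 = 0.
  by have := f_lin (-1) 0 0; rewrite scaler0 addr0 scaleN1r addNr.
by elim/big_rec2: _ => [|i y1 y2 _ <-] //; rewrite f_lin.
Qed.

Section StationaryMatrix.
Variables (K : fieldType) (n m : nat) (br : 'rV[K]_n -> 'rV[K]_n -> 'rV[K]_n).
Variable B : 'M[K]_(m, n).
Hypothesis br_lie : is_lie_bracket br.

Lemma br_suml (I : Type) (r : seq I) (a : I -> K) (x : I -> 'rV_n) z :
  br (\sum_(i <- r) a i *: x i) z = \sum_(i <- r) a i *: br (x i) z.
Proof. by have [linl _ _ _] := br_lie; apply: (@lin_sumZ K _ _ (br^~ z)) => c u v; apply: linl. Qed.

Lemma br_sumr (I : Type) (r : seq I) (a : I -> K) (x : I -> 'rV_n) z :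
  br z (\sum_(i <- r) a i *: x i) = \sum_(i <- r) a i *: br z (x i).
Proof. by have [_ linr _ _] := br_lie; apply: (@lin_sumZ K _ _ (br z)) => c u v; apply: linr. Qed.

Lemma hpair_sum (I : Type) (r : seq I) (a : I -> K) (x : I -> 'rV_n) c :
  hpair B c (\sum_(i <- r) a i *: x i) = \sum_(i <- r) a i * hpair B c (x i).
Proof.
rewrite /hpair; under eq_bigr do rewrite mulmx_suml summxE mulr_suml.
rewrite exchange_big /=; apply: eq_bigr => i _; rewrite mulr_sumr.
by apply: eq_bigr => j _; rewrite -scalemxAl mxE mulrA.
Qed.

(* Entry (i, j) is the linear form c |-> <c, [e_i, b_j]> on h^*. *)
Definition stat_mx : 'M[{mpoly K[m]}]_(n, m) :=
  \matrix_(i, j) \sum_(k < m) (br (delta_mx 0 i) (row j B) *m pinvmx B) 0 k *: 'X_k.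

Definition stat_mx_at (c : 'rV[K]_m) : 'M[K]_(n, m) := map_mx (fun p => evh p c) stat_mx.

Definition stat_mxF : 'M[KH K m]_(n, m) := map_mx (@FracField.tofrac _) stat_mx.

Lemma mul_stat_mx_at c xi j :
  (xi *m stat_mx_at c) 0 j = hpair B c (br xi (row j B)).
Proof.
rewrite mxE {2}(row_sum_delta xi) br_suml hpair_sum; apply: eq_bigr => i _.
rewrite !mxE /evh raddf_sum /hpair; congr (_ * _); apply: eq_bigr => k _.
by rewrite /= mevalZ mevalXU.
Qed.

Lemma St_kerP c xi : St br B c xi <-> (xi <= kermx (stat_mx_at c))%MS.
Proof.
rewrite sub_kermx; split => [St_xi | /eqP xiM0 eta].
  by apply/eqP/rowP => j; rewrite mul_stat_mx_at mxE St_xi ?row_sub.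
move=> /submxP [u ->]; rewrite mulmx_sum_row br_sumr hpair_sum big1 // => j _.
by rewrite -mul_stat_mx_at xiM0 mxE mulr0.
Qed.

Lemma has_dim_St c : has_dim (St br B c) (n - \rank (stat_mx_at c)).
Proof.
set M := stat_mx_at c.
have rk_ker : \rank (kermx M) = (n - \rank M)%N by rewrite mxrank_ker.
exists (castmx (rk_ker, erefl n) (row_base (kermx M))); split.
  by rewrite row_free_castmx row_base_free.
by move=> v; rewrite St_kerP (eqmx_cast _ _) eq_row_base.
Qed.

Lemma has_dim_St_eq c s :
  has_dim (St br B c) s -> s = (n - \rank (stat_mx_at c))%N.
Proof.
case=> S [S_free S_St].
have eq_S : (S :=: kermx (stat_mx_at c))%MS.
  apply/eqmxP/andP; split; apply/row_subP => i.
    by apply/St_kerP/S_St; apply: row_sub.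
  by apply/S_St/St_kerP; apply: row_sub.
by rewrite -mxrank_ker -eq_S; apply/esym/eqP.
Qed.

Lemma evh_minor_stat_mx k (f : 'I_k -> 'I_n) (g : 'I_k -> 'I_m) c :
  evh (\det (mxsub f g stat_mx)) c = \det (mxsub f g (stat_mx_at c)).
Proof. by rewrite /evh -det_map_mx; congr (\det _); apply/matrixP => i j; rewrite !mxE. Qed.

Lemma minor_stat_mxF k (f : 'I_k -> 'I_n) (g : 'I_k -> 'I_m) :
  \det (mxsub f g stat_mxF) = (\det (mxsub f g stat_mx))%:F.
Proof. by rewrite -det_map_mx; congr (\det _); apply/matrixP => i j; rewrite !mxE. Qed.

Lemma mxrank_stat_mx_at_le c : (\rank (stat_mx_at c) <= \rank stat_mxF)%N.
Proof.
have [f [g minor_neq0]] := mxrank_minor (stat_mx_at c).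
apply: (minor_neq0_mxrank (f := f) (g := g)).
rewrite minor_stat_mxF tofrac_eq0; apply: contraNneq minor_neq0 => minor0.
by rewrite -evh_minor_stat_mx minor0 /evh meval0.
Qed.

Lemma generic_rank_stat_mx : exists2 p : {mpoly K[m]}, p != 0 &
  forall c, evh p c != 0 -> \rank (stat_mx_at c) = \rank stat_mxF.
Proof.
have [f [g minor_neq0]] := mxrank_minor stat_mxF.
exists (\det (mxsub f g stat_mx)) => [|c p_c].
  by move: minor_neq0; rewrite minor_stat_mxF tofrac_eq0.
apply/eqP; rewrite eqn_leq mxrank_stat_mx_at_le.
by apply: (minor_neq0_mxrank (f := f) (g := g)); rewrite -evh_minor_stat_mx.
Qed.

Lemma generic_St_dim_rank : generic_St_dim br B (n - \rank stat_mxF).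
Proof.
have [p p_neq0 p_rank] := generic_rank_stat_mx.
by exists p; split => // c /p_rank <-; apply: has_dim_St.
Qed.

Hypothesis K_char0 : [pchar K] =i pred0.

Lemma generic_St_dim_eq s : generic_St_dim br B s -> s = (n - \rank stat_mxF)%N.
Proof.
case=> q [q_neq0 q_dim]; have [p p_neq0 p_rank] := generic_rank_stat_mx.
have [c [p_c q_c]] := evh_nonvanishing2 K_char0 p_neq0 q_neq0.
by rewrite -(p_rank c p_c); apply/has_dim_St_eq/q_dim.
Qed.

End StationaryMatrix.

Section RationalSections.
Variables (K : fieldType) (n m : nat) (br : 'rV[K]_n -> 'rV[K]_n -> 'rV[K]_n).
Variable B : 'M[K]_(m, n).
Hypothesis K_char0 : [pchar K] =i pred0.
Hypothesis B_free : row_free B.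

Local Notation pull := (pullpoly B).

HB.instance Definition _ := GRing.RMorphism.copy pull
  (comp_mpoly [tuple \sum_(i < n) B j i *: 'X_i | j < m]).

Lemma pullpoly_meval p (x : 'I_n -> K) :
  (pull p).@[x] = p.@[fun j => \sum_(i < n) B j i * x i].
Proof.
rewrite comp_mpoly_meval; apply: meval_eq => j.
rewrite tnth_mktuple raddf_sum; apply: eq_bigr => i _.
by rewrite /= mevalZ mevalXU.
Qed.

Lemma restriction_surj (c : 'rV[K]_m) :
  exists x : 'rV[K]_n, forall j, \sum_(i < n) B j i * x 0 i = c 0 j.
Proof.
have c_sub : (c <= B^T)%MS by apply: submx_full; rewrite /row_full mxrank_tr.
exists (c *m pinvmx B^T) => j.
rewrite -{2}(mulmxKpV c_sub) [RHS]mxE; apply: eq_bigr => i _.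
by rewrite [B^T i j]mxE mulrC.
Qed.

Lemma pullpoly_eq0 q : (pull q == 0) = (q == 0).
Proof.
apply/eqP/eqP => [pull_q0|->]; last exact: rmorph0.
apply: (mpoly_generic_eq0 K_char0 (oner_neq0 _)) => c _.
have [x x_c] := restriction_surj c.
have := congr1 (meval (fun i => x 0 i)) pull_q0.
by rewrite pullpoly_meval meval0 => <-; apply: meval_eq => j; rewrite x_c.
Qed.

Lemma pullfrac_div a d : d != 0 -> pullfrac B (a%:F / d%:F) = (pull a)%:F / (pull d)%:F.
Proof.
move=> d_neq0; rewrite /pullfrac; set f := a%:F / d%:F.
have den_neq0 : \d_(repr f) != 0 := denom_ratioP _.
have cross : a * \d_(repr f) = \n_(repr f) * d.
  by apply/eqP; rewrite -tofrac_eq !tofracM -eqr_div ?tofrac_eq0 // -frac_numden.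
apply/eqP; rewrite eqr_div ?tofrac_eq0 ?pullpoly_eq0 //.
by rewrite -!tofracM -!rmorphM cross.
Qed.

Lemma pullfrac_tofrac a : pullfrac B a%:F = (pull a)%:F.
Proof. by rewrite -[a%:F]divr1 -tofrac1 pullfrac_div ?oner_neq0 // rmorph1 tofrac1 divr1. Qed.

Fact pullfrac_is_zmod_morphism : zmod_morphism (pullfrac B).
Proof.
move=> f g; have [a1 [d1 d1_neq0 ->]] := frac_ratio f.
have [a2 [d2 d2_neq0 ->]] := frac_ratio g.
rewrite -mulNr -tofracN addf_div ?tofrac_eq0 // -!tofracM -tofracD.
rewrite !pullfrac_div ?mulf_neq0 // rmorphD !rmorphM rmorphN tofracD !tofracM tofracN.
by rewrite -[in RHS]mulNr addf_div ?tofrac_eq0 ?pullpoly_eq0.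
Qed.

Fact pullfrac_is_monoid_morphism : monoid_morphism (pullfrac B).
Proof.
split=> [|f g]; first by rewrite -tofrac1 pullfrac_tofrac rmorph1.
have [a1 [d1 d1_neq0 ->]] := frac_ratio f.
have [a2 [d2 d2_neq0 ->]] := frac_ratio g.
rewrite mulf_div -!tofracM !pullfrac_div ?mulf_neq0 //.
by rewrite !rmorphM mulf_div.
Qed.

HB.instance Definition _ := GRing.isZmodMorphism.Build _ _ (pullfrac B)
  pullfrac_is_zmod_morphism.
HB.instance Definition _ := GRing.isMonoidMorphism.Build _ _ (pullfrac B)
  pullfrac_is_monoid_morphism.

Local Notation F := (KH K m).

(* [fvec V] is f_Psi for the rational map Psi with coordinates V. *)
Definition fvec (V : 'rV[F]_n) : KG K n :=
  \sum_(i < n) ('X_i)%:F * pullfrac B (V 0 i).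

Fact fvec_is_linear : linear_for (pullfrac B \; *%R) fvec.
Proof.
move=> a V W /=; rewrite /fvec mulr_sumr -big_split /=; apply: eq_bigr => i _.
by rewrite !mxE rmorphD rmorphM mulrDr mulrCA.
Qed.

HB.instance Definition _ :=
  GRing.isLinear.Build F 'rV[F]_n (KG K n) _ fvec fvec_is_linear.

Definition BF : 'M[F]_(m, n) := map_mx (@FracField.tofrac _ \o @mpolyC m K) B.

Definition rowfrac (P : 'I_n -> {mpoly K[m]}) q : 'rV[F]_n :=
  \row_i ((P i)%:F / q%:F).

Lemma fPsi_rowfrac P q : q != 0 -> fPsi B P q = fvec (rowfrac P q).
Proof.
move=> q_neq0; rewrite /fPsi /fvec rmorph_sum mulr_suml; apply: eq_bigr => i _.
by rewrite mxE pullfrac_div // rmorphM mulrA.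
Qed.

Lemma rowfrac_surj (V : 'rV[F]_n) :
  exists P, exists2 q, q != 0 & V = rowfrac P q.
Proof.
pose d i := \d_(repr (V 0 i)).
have d_neq0 i : d i != 0 := denom_ratioP _.
exists (fun i => \n_(repr (V 0 i)) * \prod_(k | k != i) d k), (\prod_k d k).
  by rewrite prodf_seq_neq0; apply/allP => k _; rewrite d_neq0.
apply/rowP => i; rewrite mxE [X in _ / X%:F](bigD1 i) //= !tofracM.
rewrite invfM mulrACA divff ?mulr1; first exact: frac_numden.
by rewrite tofrac_eq0 prodf_seq_neq0; apply/allP => k _; rewrite d_neq0 implybT.
Qed.

Lemma mul_rowfrac P q p (M : 'M[{mpoly K[m]}]_(n, p)) l : q != 0 ->
  (rowfrac P q *m map_mx (@FracField.tofrac _) M) 0 l =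
    (\sum_i P i * M i l)%:F / q%:F.
Proof.
move=> q_neq0; rewrite mxE rmorph_sum mulr_suml; apply: eq_bigr => i _.
by rewrite !mxE rmorphM mulrAC.
Qed.

Lemma ratmap_eval_stat_mx P q c l :
  (ratmap_eval P q c *m stat_mx_at br B c) 0 l =
    evh (\sum_i P i * stat_mx br B i l) c / evh q c.
Proof.
rewrite mxE /evh raddf_sum mulr_suml; apply: eq_bigr => i _.
by rewrite !mxE /= mevalM mulrAC.
Qed.

Hypothesis br_lie : is_lie_bracket br.

Lemma rational_sectionP P q : q != 0 ->
  rational_section br B P q <-> (rowfrac P q <= kermx (stat_mxF br B))%MS.
Proof.
move=> q_neq0; rewrite sub_kermx.
have -> : (rowfrac P q *m stat_mxF br B == 0) =
    [forall l, \sum_i P i * stat_mx br B i l == 0].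
  apply/eqP/forallP => [/rowP M0 l | sum0]; last first.
    by apply/rowP => l; rewrite mul_rowfrac // (eqP (sum0 l)) rmorph0 mul0r mxE.
  have := M0 l; rewrite mul_rowfrac // mxE => /eqP.
  by rewrite mulf_eq0 invr_eq0 !tofrac_eq0 (negbTE q_neq0) orbF.
split=> [[_ [p [p_neq0 p_sec]]] | /forallP sum0].
  apply/forallP => l; apply/eqP/(mpoly_generic_eq0 K_char0 p_neq0) => c p_c.
  have [q_c /(St_kerP B br_lie)] := p_sec c p_c.
  rewrite sub_kermx => /eqP/rowP/(_ l); rewrite ratmap_eval_stat_mx mxE => /eqP.
  by rewrite mulf_eq0 invr_eq0 (negbTE q_c) orbF => /eqP.
split=> //; exists q; split=> // c q_c; split=> //.
apply/(St_kerP B br_lie); rewrite sub_kermx; apply/eqP/rowP => l.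
by rewrite ratmap_eval_stat_mx (eqP (sum0 l)) /evh meval0 mul0r mxE.
Qed.

Lemma Lh_kerP f :
  Lh br B f <-> exists2 V, (V <= kermx (stat_mxF br B))%MS & f = fvec V.
Proof.
split=> [[P [q [P_sec ->]]] | [V V_ker ->]].
  have [q_neq0 _] := P_sec.
  by exists (rowfrac P q); [apply/rational_sectionP | apply: fPsi_rowfrac].
have [P [q q_neq0 V_eq]] := rowfrac_surj V.
exists P, q; split; last by rewrite V_eq fPsi_rowfrac.
by apply/rational_sectionP; rewrite -?V_eq.
Qed.

Lemma fvec_row_BF j : fvec (row j BF) = (pull 'X_j)%:F.
Proof.
rewrite /fvec /pullpoly comp_mpolyXU -tnth_nth tnth_mktuple rmorph_sum.
apply: eq_bigr => i _.
by rewrite !mxE /= pullfrac_tofrac /pullpoly comp_mpolyC -rmorphM mulrC mul_mpolyC.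
Qed.

Lemma pull_linear_eq0_coker (P : 'I_n -> {mpoly K[m]}) :
  \sum_i 'X_i * pull (P i) = 0 ->
  forall c l, \sum_i evh (P i) c * cokermx B i l = 0.
Proof.
move=> sum0 c l.
have eval0 (x : 'I_n -> K) : (forall j, \sum_k B j k * x k = c 0 j) ->
    \sum_i x i * evh (P i) c = 0.
  move=> x_c; rewrite -[RHS](meval0 x) -sum0 raddf_sum; apply: eq_bigr => i _.
  rewrite /= mevalM mevalXU pullpoly_meval; congr (_ * _).
  by apply: meval_eq => j; rewrite x_c.
have [x x_c] := restriction_surj c.
(* x and y have the same image under pi. *)
pose y k := x 0 k + cokermx B k l.
have y_c j : \sum_k B j k * y k = c 0 j.
  have coker0 : \sum_k B j k * cokermx B k l = 0.
    by have := congr1 (fun M : 'M[K]_(m, n) => M j l) (mulmx_coker B); rewrite !mxE.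
  by rewrite /y; under eq_bigr do rewrite mulrDr; rewrite big_split /= coker0 addr0.
have := eval0 y y_c; rewrite /y; under eq_bigr do rewrite mulrDl.
rewrite big_split /= eval0 // add0r => coker_ev0.
by rewrite -[RHS]coker_ev0; apply: eq_bigr => i _; rewrite mulrC.
Qed.

Lemma fvec_eq0 V : fvec V = 0 -> (V <= BF)%MS.
Proof.
have [P [q q_neq0 ->]] := rowfrac_surj V.
rewrite -fPsi_rowfrac // /fPsi => /eqP.
rewrite mulf_eq0 invr_eq0 !tofrac_eq0 pullpoly_eq0 (negbTE q_neq0) orbF.
move=> /eqP /pull_linear_eq0_coker coker0.
rewrite submxE /BF -map_cokermx.
have -> : map_mx (@FracField.tofrac _ \o @mpolyC m K) (cokermx B) =
    map_mx (@FracField.tofrac _) (map_mx (@mpolyC m K) (cokermx B)).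
  by apply/matrixP => i j; rewrite !mxE.
apply/eqP/rowP => l; rewrite mul_rowfrac // mxE.
suff -> : \sum_i P i * map_mx (@mpolyC m K) (cokermx B) i l = 0.
  by rewrite rmorph0 mul0r.
apply: (mpoly_generic_eq0 K_char0 (oner_neq0 _)) => c _.
rewrite /evh raddf_sum -[RHS](coker0 c l); apply: eq_bigr => i _.
by rewrite mxE /= mevalM mevalC.
Qed.

Hypothesis B_ideal : is_comm_ideal br B.

Lemma BF_sub_kermx : (BF <= kermx (stat_mxF br B))%MS.
Proof.
rewrite sub_kermx; apply/eqP/matrixP => j l; rewrite !mxE.
have -> : \sum_i BF j i * stat_mxF br B i l =
    (\sum_i (B j i)%:MP * stat_mx br B i l)%:F.
  by rewrite rmorph_sum; apply: eq_bigr => i _; rewrite !mxE rmorphM.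
suff -> : \sum_i (B j i)%:MP * stat_mx br B i l = 0 by rewrite rmorph0.
apply: (mpoly_generic_eq0 K_char0 (oner_neq0 _)) => c _.
have hpair0 : hpair B c 0 = 0.
  by rewrite /hpair big1 // => k _; rewrite mul0mx mxE mul0r.
have := mul_stat_mx_at B br_lie c (row j B) l.
have [_ B_comm] := B_ideal; rewrite B_comm ?row_sub // hpair0 => <-.
rewrite /evh raddf_sum mxE; apply: eq_bigr => i _.
by rewrite /= mevalM mevalC !mxE.
Qed.

Lemma mxrank_BF : \rank BF = m.
Proof. by rewrite mxrank_map; apply/eqP. Qed.

Hypothesis m_gt0 : (0 < m)%N.
Let b0 : 'I_m := Ordinal m_gt0.

Lemma fvec_row_BF_neq0 : fvec (row b0 BF) != 0.
Proof. by rewrite fvec_row_BF tofrac_eq0 pullpoly_eq0 mpolyXU_neq0. Qed.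

Lemma fvec_mul_BF u : fvec (u *m BF) =
  pullfrac B (\sum_j u 0 j * (('X_j)%:F / ('X_b0)%:F)) * fvec (row b0 BF).
Proof.
rewrite mulmx_sum_row linear_sum rmorph_sum mulr_suml; apply: eq_bigr => j _.
rewrite linearZ /= !fvec_row_BF rmorphM /= pullfrac_div ?mpolyXU_neq0 //.
by rewrite -mulrA divfK // tofrac_eq0 pullpoly_eq0 mpolyXU_neq0.
Qed.

Lemma fvec_complement_indep k (C : 'M[F]_(k, n)) u a :
  row_free C -> (C :&: BF)%MS = 0 ->
  fvec (u *m C) + pullfrac B a * fvec (row b0 BF) = 0 -> u = 0 /\ a = 0.
Proof.
move=> C_free C_BF0 sum0.
have /fvec_eq0 uCa_BF : fvec (u *m C + a *: row b0 BF) = 0.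
  by rewrite linearD linearZ.
have uC_BF : (u *m C <= BF)%MS.
  rewrite -[u *m C](addrK (a *: row b0 BF)) addmx_sub ?eqmx_opp //.
  by rewrite scalemx_sub ?row_sub.
have uC0 : u *m C = 0.
  by apply/eqP; rewrite -submx0 -C_BF0 sub_capmx submxMl uC_BF.
have u0 : u = 0 by apply: (row_free_inj C_free); rewrite mul0mx.
split=> //; apply/eqP; rewrite -(fmorph_eq0 (pullfrac B)).
move: sum0; rewrite uC0 linear0 add0r => /eqP.
by rewrite mulf_eq0 (negbTE fvec_row_BF_neq0) orbF.
Qed.

Lemma Lh_has_dim_kermx :
  Lh_has_dim br B (\rank (kermx (stat_mxF br B)) - m + 1).
Proof.
have [C [C_free C_ker C_BF0 ker_CBF]] :=
  complement_basis BF_sub_kermx mxrank_BF (erefl _).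
pose r := (\rank (kermx (stat_mxF br B)) - m)%N.
pose fs (k : 'I_(r + 1)) :=
  if split k is inl j then fvec (row j C) else fvec (row b0 BF).
have fs_inl j : fs (lshift 1 j) = fvec (row j C) by rewrite /fs (unsplitK (inl _ j)).
have fs_inr : fs (rshift r ord0) = fvec (row b0 BF).
  by rewrite /fs (unsplitK (inr _ ord0)).
have sum_fs a : \sum_k pullfrac B (a k) * fs k =
    fvec (\row_j a (lshift 1 j) *m C) + pullfrac B (a (rshift r ord0)) * fvec (row b0 BF).
  rewrite big_split_ord big_ord1 fs_inr mulmx_sum_row linear_sum; congr (_ + _).
  by apply: eq_bigr => j _; rewrite linearZ fs_inl mxE.
exists fs; split; [|split].
- move=> k; apply/Lh_kerP; rewrite /fs; case: (split k) => [j|_].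
    by exists (row j C); rewrite ?(submx_trans (row_sub j C)).
  by exists (row b0 BF); rewrite ?(submx_trans (row_sub b0 BF) BF_sub_kermx).
- move=> a; rewrite sum_fs => /(fvec_complement_indep C_free C_BF0) [/rowP a_inl a_inr] k.
  rewrite -(splitK k); case: (split k) => [j | j] /=; last by rewrite (ord1 j).
  by have := a_inl j; rewrite !mxE.
move=> f /Lh_kerP [V V_ker ->].
have /sub_addsmxP [[u v] /= ->] : (V <= C + BF)%MS := submx_trans V_ker ker_CBF.
exists (fun k => if split k is inl j then u 0 j
  else \sum_j v 0 j * (('X_j)%:F / ('X_b0)%:F)).
rewrite sum_fs linearD /= fvec_mul_BF (unsplitK (inr _ ord0)); congr (fvec (_ *m C) + _).
by apply/rowP => j; rewrite mxE (unsplitK (inl _ j)).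
Qed.

End RationalSections.

Unset Implicit Arguments.
Set Strict Implicit.

Theorem lemma5 (K : fieldType) (n m : nat)
  (br : 'rV[K]_n -> 'rV[K]_n -> 'rV[K]_n) (B : 'M[K]_(m, n)) :
  [pchar K] =i pred0 ->
  is_lie_bracket br ->
  row_free B ->
  (0 < m)%N ->
  is_comm_ideal br B ->
  (exists s, generic_St_dim br B s) /\
  (forall s, generic_St_dim br B s -> Lh_has_dim br B (s - m + 1)).
Proof.
move=> K_char0 br_lie B_free m_gt0 B_ideal; split.
  by eexists; apply: generic_St_dim_rank.
move=> s /(generic_St_dim_eq br_lie K_char0) ->.
by rewrite -mxrank_ker; apply: Lh_has_dim_kermx.
Qed.
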